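(* Let $\mathcal{A}$ be an $(a,0)$-absorbing set with absorbing set graph $\mathcal{G}_{\mathcal{A}}$ and parity-check matrix $H_{\mathcal{A}}$. Run the syndrome-based Gallager-B decoder on $\mathcal{G}_{\mathcal{A}}$ with all variable nodes of $\mathcal{A}$ in error. - If the all-ones vector $\vec{1}$ is in the $\mathbb{F}_2$-rowspace of $H_{\mathcal{A}}$, then $\mathcal{A}$ is not a failure inducing set on $\mathcal{G}_{\mathcal{A}}$: the decoder returns a degenerate error. - If $\vec{1}$ is not in that rowspace, then decoding results in a logical error and $\mathcal{A}$ is a failure inducing set for $\mathcal{G}_{\mathcal{A}}$.
   Context: Tanner graph: a bipartite graph $\mathcal{G}=(V,W;E)$ with variable nodes $V$ and check nodes $W$. Equivalently, a binary parity-check matrix $H$ with rows indexed by $W$ and columns by $V$, where $h_{c,v}=1$ iff $(v,c)\in E$. Notation for a subset $S\subseteq V$: - $\mathcal{N}(S)$ is the set of check nodes adjacent to some vertex of $S$. - $\mathcal{G}_S$ is the subgraph with vertex set $S\cup\mathcal{N}(S)$ and all edges of $\mathcal{G}$ between $S$ and $\mathcal{N}(S)$. - $\mathcal{O}_S$ (resp. $\mathcal{E}_S$) is the set of check nodes of $\mathcal{N}(S)$ having odd (resp. even) degree in $\mathcal{G}_S$. An $(a,b)$-absorbing set is a set $\mathcal{A}\subseteq V$ such that: - $|\mathcal{A}|=a$; - $|\mathcal{O}_{\mathcal{A}}|=b$; - every $v\in\mathcal{A}$ has strictly more neighbours in $\mathcal{E}_{\mathcal{A}}$ than in $\mathcal{O}_{\mathcal{A}}$.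 $\mathcal{G}_{\mathcal{A}}$ is called the absorbing set graph and $H_{\mathcal{A}}$ denotes its parity-check matrix. Syndrome-based Gallager-B decoder on a Tanner graph $\mathcal{G}$: - An error pattern is $e\in\mathbb{F}_2^V$, the indicator of the variable nodes in error. Its input syndrome is $\sigma\in\mathbb{F}_2^W$ with $\sigma_c=\sum_{v\in\mathcal{N}(c)}e_v \bmod 2$. - Initially every variable node sends $0$ on every edge. - In each iteration, each check node $c$ sends to a neighbour $v$ the value $\sigma_c+\sum_{v'\in\mathcal{N}(c)\setminus\{v\}} m_{v'\to c} \pmod 2$, where the $m_{v'\to c}$ are the current variable-to-check messages. - Each variable node $v$ then sends to a neighbour $c$ the majority of the messages it received from its neighbours other than $c$. It sends $0$ on a tie, in particular when $v$ has no other neighbour. - The estimated error $\hat e_v$ is the majority of all incoming check-to-variable messages at $v$, and $0$ on a tie. - The estimated syndrome at $c$ is the mod-2 sum of the variable-to-check messages arriving at $c$. - Before any message passing, all messages are $0$, the estimated syndrome is $\vec 0$ and $\hat e=\vec 0$. - The decoder halts and outputs $\hat e$ as soon as the estimated syndrome equals $\sigma$; otherwise it iterates indefinitely. Decoding failure occurs if either: - the decoder never halts (the estimated syndrome is never eventually equal to $\sigma$, or the estimates fail to converge); or - it halts with $\hat e$ such that $e+\hat e$ is not in the $\mathbb{F}_2$-rowspace of the parity-check matrix of the graph being decoded on (a logical error). Halting with $e+\hat e$ in that rowspace is success (a degenerate error). A set $\mathcal{F}\subseteq V$ is a failure inducing set (for decoding on $\mathcal{G}$) if decoding with $e$ equal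 to the indicator of $\mathcal{F}$, all other variable nodes being correct, results in decoding failure. A nonempty $\mathcal{T}\subseteq V$ is a trapping set if some subset of $\mathcal{T}$ is failure inducing. *)

From HB Require Import structures.
From mathcomp Require Import all_boot all_order all_algebra.
Set Implicit Arguments. Unset Strict Implicit. Unset Printing Implicit Defensive.
Import GRing.Theory.
Local Open Scope ring_scope.

Section Tanner.
(* A Tanner graph: variable nodes V, check nodes W, and the edge relation
   adj v c  (equivalently h_{c,v} = 1 iff adj v c). *)
Variables (V W : finType) (adj : V -> W -> bool).

Definition nbhd (S : {set V}) : {set W} := [set c | [exists v in S, adj v c]].
Definition degS (S : {set V}) (c : W) : nat := #|[set v in S | adj v c]|.
Definition odd_checks (S : {set V}) : {set W} :=
  [set c in nbhd S | odd (degS S c)].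
Definition even_checks (S : {set V}) : {set W} :=
  [set c in nbhd S | ~~ odd (degS S c)].

Definition absorbing_set (A : {set V}) (a b : nat) : Prop :=
  [/\ #|A| = a, #|odd_checks A| = b &
      forall v, v \in A ->
        (#|[set c in odd_checks A | adj v c]| < #|[set c in even_checks A | adj v c]|)%N].

Definition hrow (c : W) : {ffun V -> 'F_2} := [ffun v => (adj v c)%:R].

Definition in_rowspace (x : {ffun V -> 'F_2}) : Prop :=
  exists y : {ffun W -> 'F_2}, forall v, x v = \sum_(c : W) y c * hrow c v.

Definition syndrome (e : {ffun V -> 'F_2}) : {ffun W -> 'F_2} :=
  [ffun c => \sum_(v | adj v c) e v].

(* variable-to-check messages: m v c is the message on edge (v,c) *)
Definition msg := V -> W -> 'F_2.

Definition c2v (s : {ffun W -> 'F_2}) (m : msg) (c : W) (v : V) : 'F_2 :=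
  s c + \sum_(v' | adj v' c && (v' != v)) m v' c.

(* strict majority of the values f c' over c' satisfying P; 0 on a tie *)
Definition majority (P : pred W) (f : W -> 'F_2) : 'F_2 :=
  if (#|[set c | P c && (f c == 0%R)]| < #|[set c | P c && (f c == 1%R)]|)%N
  then 1 else 0.

Definition v2c (s : {ffun W -> 'F_2}) (m : msg) : msg :=
  fun v c => majority (fun c' => adj v c' && (c' != c)) (fun c' => c2v s m c' v).

Fixpoint vc_msgs (s : {ffun W -> 'F_2}) (t : nat) : msg :=
  match t with
  | 0 => fun _ _ => 0
  | t'.+1 => v2c s (vc_msgs s t')
  end.

Definition est_syndrome (s : {ffun W -> 'F_2}) (t : nat) : {ffun W -> 'F_2} :=
  [ffun c => \sum_(v | adj v c) vc_msgs s t v c].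

(* estimated error after t iterations: 0 before message passing; in
   iteration t'.+1 the check-to-variable messages are computed from the
   messages after t' iterations. *)
Definition est_error (s : {ffun W -> 'F_2}) (t : nat) : {ffun V -> 'F_2} :=
  match t with
  | 0 => 0
  | t'.+1 => [ffun v => majority (adj v) (fun c => c2v s (vc_msgs s t') c v)]
  end.

Definition halts_at (e : {ffun V -> 'F_2}) (t : nat) : Prop :=
  est_syndrome (syndrome e) t = syndrome e /\
  forall t', (t' < t)%N -> est_syndrome (syndrome e) t' <> syndrome e.

Definition never_halts (e : {ffun V -> 'F_2}) : Prop :=
  forall t, est_syndrome (syndrome e) t <> syndrome e.

Definition degenerate_success (e : {ffun V -> 'F_2}) : Prop :=
  exists t, halts_at e t /\ in_rowspace (e + est_error (syndrome e) t).

Definition logical_error (e : {ffun V -> 'F_2}) : Prop :=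
  exists t, halts_at e t /\ ~ in_rowspace (e + est_error (syndrome e) t).

Definition decoding_failure (e : {ffun V -> 'F_2}) : Prop :=
  never_halts e \/ logical_error e.

Definition indicator (F : {set V}) : {ffun V -> 'F_2} := [ffun v => (v \in F)%:R].

Definition failure_inducing (F : {set V}) : Prop :=
  decoding_failure (indicator F).

End Tanner.

(* The absorbing set graph G_A: variable nodes A, check nodes N(A), and all
   edges of G between them. *)
Definition agV (V : finType) (A : {set V}) := {v : V | v \in A}.
Definition agW (V W : finType) (adj : V -> W -> bool) (A : {set V}) :=
  {c : W | c \in nbhd adj A}.
HB.instance Definition _ (V : finType) (A : {set V}) :=
  Finite.on (agV A).
HB.instance Definition _ (V W : finType) (adj : V -> W -> bool) (A : {set V}) :=
  Finite.on (agW adj A).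
Definition ag_adj (V W : finType) (adj : V -> W -> bool) (A : {set V})
  (v : agV A) (c : agW adj A) : bool := adj (val v) (val c).
Arguments ag_adj {V W} adj A v c.

From HB Require Import structures.
From mathcomp Require Import all_boot all_order all_algebra.
Local Open Scope ring_scope.
Import GRing.Theory.

(* For an (a,0)-absorbing set A every check node of the
   absorbing set graph G_A has even degree, so the input syndrome of the
   all-ones error pattern on G_A is zero.  The estimated syndrome before any
   message passing is also zero, hence the decoder halts at time 0 and, the
   halting time being unique, outputs the initial estimate 0.  The residual
   error e + 0 is the all-ones vector, so decoding is a success exactly when
   that vector lies in the rowspace of H_A, and a logical error otherwise. *)

Lemma F2_natr_even (n : nat) : ~~ odd n -> (n%:R : 'F_2) = 0.
Proof.
by move=> n_even; apply/val_inj; rewrite /= val_Fp_nat // modn2 (negbTE n_even).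
Qed.

Section ZeroSyndrome.
Context {V W : finType} {adj : V -> W -> bool}.

Lemma syndrome_indicator (F : {set V}) (c : W) :
  syndrome adj (indicator F) c = (degS adj F c)%:R.
Proof.
rewrite ffunE (bigID (mem F)) /=.
rewrite [X in _ + X]big1 => [|v /andP[_ vNF]]; last by rewrite ffunE (negbTE vNF).
rewrite addr0 (eq_bigr (fun=> 1)) => [|v /andP[_ vF]]; last by rewrite ffunE vF.
rewrite sumr_const /degS; congr (_%:R); apply: eq_card => v.
by rewrite !inE andbC.
Qed.

Lemma syndrome_indicator_eq0 (F : {set V}) :
  odd_checks adj F = set0 -> syndrome adj (indicator F) = 0.
Proof.
move=> noOdd; apply/ffunP => c; rewrite syndrome_indicator ffunE.
apply: F2_natr_even; apply/negP => degOdd.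
have cN : c \in nbhd adj F.
  have /set0Pn[v] : [set v in F | adj v c] != set0.
    by rewrite -cards_eq0; apply: contraTneq degOdd; rewrite /degS => ->.
  by rewrite !inE => vF_adj; apply/existsP; exists v.
have : c \in odd_checks adj F by rewrite inE cN degOdd.
by rewrite noOdd inE.
Qed.

End ZeroSyndrome.

Section ZeroSyndromeDecoding.
Context {V W : finType} {adj : V -> W -> bool}.
Implicit Types (e : {ffun V -> 'F_2}) (s : {ffun W -> 'F_2}).

Lemma est_syndrome0 s : est_syndrome adj s 0 = 0.
Proof. by apply/ffunP => c; rewrite !ffunE big1. Qed.

Lemma halts_at_unique {e t t'} : halts_at adj e t -> halts_at adj e t' -> t = t'.
Proof.
move=> [hal_t first_t] [hal_t' first_t'].
by case: (ltngtP t t') => // [/first_t' | /first_t].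
Qed.

Lemma halts_at0 {e} : syndrome adj e = 0 -> halts_at adj e 0.
Proof. by move=> se0; split=> [|//]; rewrite se0 est_syndrome0. Qed.

Lemma zero_syndrome_success {e} :
  syndrome adj e = 0 -> degenerate_success adj e <-> in_rowspace adj e.
Proof.
move=> se0; have hal0 := halts_at0 se0; split.
  by case=> t [/(halts_at_unique hal0) <-]; rewrite addr0.
by move=> eR; exists 0%N; rewrite /= addr0.
Qed.

Lemma zero_syndrome_logical_error {e} :
  syndrome adj e = 0 -> logical_error adj e <-> ~ in_rowspace adj e.
Proof.
move=> se0; have hal0 := halts_at0 se0; split.
  by case=> t [/(halts_at_unique hal0) <-]; rewrite addr0.
by move=> eNR; exists 0%N; rewrite /= addr0.
Qed.

Lemma halting_failure {e t} :
  halts_at adj e t -> decoding_failure adj e <-> logical_error adj e.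
Proof.
move=> [hal_t _]; split=> [[never | //] | logical]; last by right.
by case: (never t hal_t).
Qed.

End ZeroSyndromeDecoding.

Section AbsorbingSetGraph.
Context {V W : finType} {adj : V -> W -> bool} {A : {set V}}.

Lemma degS_ag (c : agW adj A) :
  degS (ag_adj adj A) [set: agV A] c = degS adj A (val c).
Proof.
rewrite /degS -(card_imset _ val_inj); apply: eq_card => v; rewrite inE.
apply/imsetP/andP => [[x] | [vA adj_vc]].
  by rewrite !inE => adj_xc ->; split; first exact: valP.
by exists (exist _ v vA); rewrite ?inE.
Qed.

Lemma odd_checks_ag : odd_checks adj A = set0 ->
  odd_checks (ag_adj adj A) [set: agV A] = set0.
Proof.
move=> noOdd; apply/setP => c; rewrite !inE degS_ag.
apply/negP => /andP[_ degOdd].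
have : val c \in odd_checks adj A by rewrite inE (valP c) degOdd.
by rewrite noOdd inE.
Qed.

Lemma indicator_setT : indicator [set: agV A] = [ffun _ => 1].
Proof. by apply/ffunP => v; rewrite !ffunE in_setT. Qed.

End AbsorbingSetGraph.

Theorem mainTheorem3 (V W : finType) (adj : V -> W -> bool) (A : {set V}) (a : nat) :
  absorbing_set adj A a 0 ->
  (in_rowspace (ag_adj adj A) [ffun _ => 1] ->
     degenerate_success (ag_adj adj A) (indicator [set: agV A]) /\
     ~ failure_inducing (ag_adj adj A) [set: agV A]) /\
  (~ in_rowspace (ag_adj adj A) [ffun _ => 1] ->
     logical_error (ag_adj adj A) (indicator [set: agV A]) /\
     failure_inducing (ag_adj adj A) [set: agV A]).
Proof.
case=> _ /eqP; rewrite cards_eq0 => /eqP noOdd _.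
set e := indicator [set: agV A].
have se0 : syndrome (ag_adj adj A) e = 0.
  exact/syndrome_indicator_eq0/odd_checks_ag.
have [to_logical of_logical] := halting_failure (halts_at0 se0).
have [logical_notR notR_logical] := zero_syndrome_logical_error se0.
rewrite /failure_inducing -indicator_setT -/e.
split=> [eR | eNR].
  split; first exact/(zero_syndrome_success se0).
  by move=> /to_logical/logical_notR.
have logical := notR_logical eNR.
by split; last exact: of_logical.
Qed.
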